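(* Let $w_1,\dots,w_n$ be real weights, and let $a_1\ge\cdots\ge a_n$ and $b_1\ge\cdots\ge b_n$ be real numbers in $[a,b]$ such that $\min(a_i,b_i)\ge\max(a_{i+1},b_{i+1})$ for $1\le i<n$, \[ \sum_{i=1}^n w_ia_i=\sum_{i=1}^n w_ib_i,\qquad \sum_{i=1}^n w_ia_i^2=\sum_{i=1}^n w_ib_i^2, \] and \[ \sum_{i=1}^j w_i(a_i-a_{j+1})(a_i-b_{j+1})\ge\sum_{i=1}^j w_i(b_i-a_{j+1})(b_i-b_{j+1})\quad\text{for all }1\le j<n. \] Then $\sum_{i=1}^n w_if(a_i)\ge\sum_{i=1}^n w_if(b_i)$ for every three times differentiable $f:[a,b]\to\mathbb{R}$ with $f'''\ge 0$. *)

From Stdlib Require Import Reals Lra.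
Open Scope R_scope.

(* sum1 n f = f 1 + f 2 + ... + f n  (1-based indexing, as in the paper) *)
Fixpoint sum1 (n : nat) (f : nat -> R) : R :=
  match n with
  | O => 0
  | S k => sum1 k f + f (S k)
  end.

(* With D = [a,b] this gives one-sided derivatives at the endpoints. *)
Definition deriv_within (D : R -> Prop) (f : R -> R) (x l : R) : Prop :=
  forall eps : R, 0 < eps ->
    exists delta : R, 0 < delta /\
      forall y : R, D y -> y <> x -> Rabs (y - x) < delta ->
        Rabs ((f y - f x) / (y - x) - l) < eps.

Definition thrice_diff_nonneg3 (a b : R) (f : R -> R) : Prop :=
  let I := fun x => a <= x <= b in
  exists f1 f2 f3 : R -> R,
    forall x, I x ->
      deriv_within I f x (f1 x) /\
      deriv_within I f1 x (f2 x) /\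
      deriv_within I f2 x (f3 x) /\
      0 <= f3 x.

(* Put mu = sum_i w_i (delta_{A_i} - delta_{B_i}), a finite signed measure on
   [a, b]; the claim is  int f dmu >= 0  whenever f''' >= 0.  The proof has two
   independent halves.

   Analytic half (general signed measures with vanishing moments of order
   0, 1, 2): let R_t(x) be the second-order Taylor remainder of f at t, and
   Phi(t) = sum_k c_k [x_k >= t] R_t(x_k).  Then Phi(a) = int f dmu (the moments
   kill the Taylor polynomial), Phi(b) = 0, and on every interval free of atoms
   Phi' (t) = -f'''(t)/2 * int (x - t)_+^2 dmu(x).  Hence Phi decreases on
   [a, b] as soon as G(t) = int (x - t)_+^2 dmu is nonnegative; no integral
   form of the remainder is needed, only the mean value theorem.

   Combinatorial half: G >= 0 for the measure of the theorem.  For t below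
   both points of pairs 1..j, those pairs contribute the affine function
   L_j(t) = sum_{i<=j} w_i ((A_i - t)^2 - (B_i - t)^2), the later pairs drop
   out by separation, and the hypotheses say exactly that L_j is nonnegative
   between consecutive midpoints; a concavity argument handles the one pair
   straddled by t. *)

From Stdlib Require Import Reals Lra Lia List.
Open Scope R_scope.

Lemma sum1_ext (n : nat) (f g : nat -> R) :
  (forall i, (1 <= i <= n)%nat -> f i = g i) -> sum1 n f = sum1 n g.
Proof.
  induction n as [|n IH]; intros hfg; simpl; [reflexivity|].
  rewrite IH, hfg; [reflexivity | lia | intros i hi; apply hfg; lia].
Qed.

Lemma sum1_trunc (m n : nat) (g : nat -> R) :
  (m <= n)%nat -> (forall i, (m < i <= n)%nat -> g i = 0) -> sum1 n g = sum1 m g.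
Proof.
  induction n as [|n IH]; intros hmn hzero.
  - replace m with 0%nat by lia; reflexivity.
  - destruct (Nat.eq_dec m (S n)) as [->|hne]; [reflexivity|].
    simpl; rewrite IH, hzero; [ring | lia | lia | intros i hi; apply hzero; lia].
Qed.

Lemma sum1_minus (n : nat) (f g : nat -> R) :
  sum1 n (fun i => f i - g i) = sum1 n f - sum1 n g.
Proof. induction n as [|n IH]; cbn [sum1]; [|rewrite IH]; ring. Qed.

(* A finite signed measure is a list of (weight, point) pairs;
   msum mu g = sum_k c_k g(x_k) is the integral of g against it. *)
Fixpoint msum (mu : list (R * R)) (g : R -> R) : R :=
  match mu with
  | nil => 0
  | (c, x) :: rest => c * g x + msum rest g
  end.

Lemma msum_ext_in (mu : list (R * R)) (g h : R -> R) :
  (forall c x, In (c, x) mu -> g x = h x) -> msum mu g = msum mu h.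
Proof.
  induction mu as [|[c x] mu IH]; intros hgh; simpl; [reflexivity|].
  rewrite (hgh c x (or_introl eq_refl)), IH; [reflexivity|].
  intros c' x' hin; apply (hgh c' x'); right; exact hin.
Qed.

Lemma msum_scal (mu : list (R * R)) (k : R) (g : R -> R) :
  msum mu (fun x => k * g x) = k * msum mu g.
Proof. induction mu as [|[c x] mu IH]; cbn [msum]; [|rewrite IH]; ring. Qed.

Lemma msum_zero (mu : list (R * R)) : msum mu (fun _ => 0) = 0.
Proof. induction mu as [|[c x] mu IH]; cbn [msum]; [|rewrite IH]; ring. Qed.

Lemma msum_sub_quadratic (mu : list (R * R)) (g : R -> R) (p q r : R) :
  msum mu (fun x => g x - (p + q * x + r * x ^ 2))
  = msum mu g - (p * msum mu (fun _ => 1) + q * msum mu (fun x => x)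
                 + r * msum mu (fun x => x ^ 2)).
Proof. induction mu as [|[c x] mu IH]; cbn [msum]; [|rewrite IH]; ring. Qed.

Lemma msum_derive (mu : list (R * R)) (F : R -> R -> R) (F' : R -> R) (t : R) :
  (forall x, derivable_pt_lim (fun s => F s x) t (F' x)) ->
  derivable_pt_lim (fun s => msum mu (F s)) t (msum mu F').
Proof.
  intros hF; induction mu as [|[c x] mu IH]; simpl.
  - apply derivable_pt_lim_const.
  - apply (derivable_pt_lim_plus (fun s => c * F s x) (fun s => msum mu (F s))); [|exact IH].
    apply (derivable_pt_lim_scal (fun s => F s x)), hF.
Qed.

Lemma msum_limit (mu : list (R * R)) (F : R -> R -> R) (D : R -> Prop) (t : R) :
  (forall x, limit1_in (fun s => F s x) D (F t x) t) ->
  limit1_in (fun s => msum mu (F s)) D (msum mu (F t)) t.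
Proof.
  intros hF; induction mu as [|[c x] mu IH]; simpl.
  - exact (limit_free (fun _ => 0) D t t).
  - apply (limit_plus (fun s => c * F s x) (fun s => msum mu (F s))); [|exact IH].
    exact (limit_mul _ _ D _ _ t (limit_free (fun _ => c) D t t) (hF x)).
Qed.

Lemma limit1_ext (f g : R -> R) (D : R -> Prop) (l l' x0 : R) :
  (forall y, f y = g y) -> l = l' -> limit1_in f D l x0 -> limit1_in g D l' x0.
Proof.
  intros hfg <- hf eps heps; destruct (hf eps heps) as [d [hd hnear]].
  exists d; split; [exact hd|]; intros y hy; rewrite <- hfg; exact (hnear y hy).
Qed.

Lemma derivable_pt_lim_ext_val (f g : R -> R) (x l l' : R) :
  (forall y, f y = g y) -> l = l' -> derivable_pt_lim f x l -> derivable_pt_lim g x l'.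
Proof. intros hfg <-; apply derivable_pt_lim_ext, hfg. Qed.

Lemma deriv_within_interior (a b : R) (f : R -> R) (x l : R) :
  a < x < b -> deriv_within (fun y => a <= y <= b) f x l -> derivable_pt_lim f x l.
Proof.
  intros hx hf eps heps; destruct (hf eps heps) as [d [hd hquot]].
  assert (hpos : 0 < Rmin d (Rmin (x - a) (b - x))) by (repeat apply Rmin_pos; lra).
  exists (mkposreal _ hpos); intros h hh0 hh; simpl in hh.
  pose proof (Rmin_l d (Rmin (x - a) (b - x))); pose proof (Rmin_r d (Rmin (x - a) (b - x))).
  pose proof (Rmin_l (x - a) (b - x)); pose proof (Rmin_r (x - a) (b - x)).
  apply Rabs_def2 in hh as hh'.
  specialize (hquot (x + h)); replace (x + h - x) with h in hquot by ring.
  apply hquot; lra.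
Qed.

(* A function differentiable within D at x is continuous within D at x:
   near x the difference quotient stays below |l| + 1. *)
Lemma deriv_within_continuous (D : R -> Prop) (f : R -> R) (x l : R) :
  deriv_within D f x l -> limit1_in f D (f x) x.
Proof.
  intros hf eps heps; destruct (hf 1 Rlt_0_1) as [d [hd hquot]].
  pose proof (Rabs_pos l) as hl.
  exists (Rmin d (eps / (Rabs l + 1))); split.
  { apply Rmin_pos; [lra | apply Rdiv_lt_0_compat; lra]. }
  intros y [hy hdist]; simpl in hdist |- *; unfold R_dist in *.
  pose proof (Rmin_l d (eps / (Rabs l + 1))); pose proof (Rmin_r d (eps / (Rabs l + 1))).
  destruct (Req_dec y x) as [->|hne]; [rewrite Rminus_diag, Rabs_R0; lra|].
  specialize (hquot y hy hne ltac:(lra)).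
  set (q := (f y - f x) / (y - x)) in *.
  assert (hbound : Rabs q <= Rabs l + 1).
  { replace q with ((q - l) + l) by ring; pose proof (Rabs_triang (q - l) l); lra. }
  replace (f y - f x) with (q * (y - x)) by (unfold q; field; lra).
  rewrite Rabs_mult.
  apply Rle_lt_trans with ((Rabs l + 1) * Rabs (y - x)).
  { apply Rmult_le_compat_r; [apply Rabs_pos | exact hbound]. }
  apply Rlt_le_trans with ((Rabs l + 1) * (eps / (Rabs l + 1))).
  { apply Rmult_lt_compat_l; lra. }
  right; field; lra.
Qed.

(* A function with nonpositive derivative on (u, v) that is continuous
   within [u, v] at u and v satisfies Psi v <= Psi u: apply the mean value
   theorem on an inner interval and let its ends approach u and v. *)
Lemma nonincreasing_of_deriv_nonpos (Psi Psi' : R -> R) (u v : R) :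
  u < v ->
  (forall t, u < t < v -> derivable_pt_lim Psi t (Psi' t)) ->
  (forall t, u < t < v -> Psi' t <= 0) ->
  limit1_in Psi (fun t => u <= t <= v) (Psi u) u ->
  limit1_in Psi (fun t => u <= t <= v) (Psi v) v ->
  Psi v <= Psi u.
Proof.
  intros huv hderiv hneg cont_u cont_v.
  assert (interior : forall x y, u < x -> x < y -> y < v -> Psi y <= Psi x).
  { intros x y hx hxy hy.
    destruct (MVT_cor2 Psi Psi' x y hxy) as [c [hmvt hc]]; [intros; apply hderiv; lra|].
    pose proof (hneg c ltac:(lra)); nra. }
  apply Rle_plus_epsilon; intros eps heps.
  destruct (cont_u (eps / 2) ltac:(lra)) as [du [hdu near_u]].
  destruct (cont_v (eps / 2) ltac:(lra)) as [dv [hdv near_v]].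
  set (ru := Rmin du ((v - u) / 3)); set (rv := Rmin dv ((v - u) / 3)).
  assert (0 < ru) by (apply Rmin_pos; lra); assert (0 < rv) by (apply Rmin_pos; lra).
  assert (ru <= du) by apply Rmin_l; assert (ru <= (v - u) / 3) by apply Rmin_r.
  assert (rv <= dv) by apply Rmin_l; assert (rv <= (v - u) / 3) by apply Rmin_r.
  specialize (near_u (u + ru / 2)); specialize (near_v (v - rv / 2)).
  simpl in near_u, near_v; unfold R_dist in near_u, near_v.
  replace (u + ru / 2 - u) with (ru / 2) in near_u by ring.
  replace (v - rv / 2 - v) with (- (rv / 2)) in near_v by ring.
  rewrite Rabs_pos_eq in near_u by lra; rewrite Rabs_Ropp, Rabs_pos_eq in near_v by lra.
  apply Rabs_def2 in near_u; [|split; lra]; apply Rabs_def2 in near_v; [|split; lra].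
  pose proof (interior (u + ru / 2) (v - rv / 2) ltac:(lra) ltac:(lra) ltac:(lra)).
  lra.
Qed.

(* A function that decreases across every subinterval of [a, b] free of the
   points of S decreases across all of [a, b]: split at the points of S. *)
Lemma nonincreasing_off_points (Phi : R -> R) (a b : R) (S : list R) :
  (forall u v, a <= u -> u < v -> v <= b ->
     (forall x, In x S -> ~ (u < x < v)) -> Phi v <= Phi u) ->
  forall u v, a <= u -> u <= v -> v <= b -> Phi v <= Phi u.
Proof.
  induction S as [|p S IH]; intros hgap u v hau huv hvb.
  - destruct (Req_dec u v) as [->|hne]; [lra|].
    apply hgap; [lra | lra | lra | intros x []].
  - apply IH; [|lra | lra | lra]. clear u v hau huv hvb.
    intros u v hau huv hvb hfree.
    destruct (Rlt_dec u p) as [hup|hup]; [destruct (Rlt_dec p v) as [hpv|hpv]|].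
    + apply Rle_trans with (Phi p); apply hgap; try lra;
        intros x [<-|hx]; try lra; intros hxin; apply (hfree x hx); lra.
    + apply hgap; try lra; intros x [<-|hx]; [lra | exact (hfree x hx)].
    + apply hgap; try lra; intros x [<-|hx]; [lra | exact (hfree x hx)].
Qed.

Definition taylor_rem (f f1 f2 : R -> R) (t x : R) : R :=
  f x - f t - f1 t * (x - t) - f2 t * (x - t) ^ 2 / 2.

Definition above (t x : R) : R := if Rle_dec t x then 1 else 0.

Definition pos_sq (t x : R) : R := if Rle_dec t x then (x - t) ^ 2 else 0.

Lemma taylor_rem_self (f f1 f2 : R -> R) (t : R) : taylor_rem f f1 f2 t t = 0.
Proof. unfold taylor_rem; field. Qed.

(* As a function of the base point t the remainder has derivative
   -f'''(t) (x - t)^2 / 2: all lower-order terms cancel. *)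
Lemma taylor_rem_derive (f f1 f2 f3 : R -> R) (t x : R) :
  derivable_pt_lim f t (f1 t) -> derivable_pt_lim f1 t (f2 t) ->
  derivable_pt_lim f2 t (f3 t) ->
  derivable_pt_lim (fun s => taylor_rem f f1 f2 s x) t (- f3 t * (x - t) ^ 2 / 2).
Proof.
  intros d0 d1 d2.
  assert (dlin : derivable_pt_lim (fun s => x - s) t (0 - 1)).
  { apply (derivable_pt_lim_minus (fun _ => x) (fun s => s)).
    - apply derivable_pt_lim_const.
    - apply derivable_pt_lim_id. }
  pose proof (derivable_pt_lim_mult _ _ t _ _ dlin dlin) as dsq.
  pose proof (derivable_pt_lim_minus _ _ t _ _
    (derivable_pt_lim_minus _ _ t _ _
      (derivable_pt_lim_minus _ _ t _ _ (derivable_pt_lim_const (f x) t) d0)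
      (derivable_pt_lim_mult _ _ t _ _ d1 dlin))
    (derivable_pt_lim_mult _ _ t _ _ (derivable_pt_lim_mult _ _ t _ _ d2 dsq)
      (derivable_pt_lim_const (/ 2) t))) as d.
  refine (derivable_pt_lim_ext_val _ _ _ _ _ _ _ d);
    [intro s; unfold taylor_rem | ]; cbv [minus_fct mult_fct fct_cte]; field.
Qed.

Lemma taylor_rem_limit (f f1 f2 : R -> R) (D : R -> Prop) (t x : R) :
  limit1_in f D (f t) t -> limit1_in f1 D (f1 t) t -> limit1_in f2 D (f2 t) t ->
  limit1_in (fun s => taylor_rem f f1 f2 s x) D (taylor_rem f f1 f2 t x) t.
Proof.
  intros c0 c1 c2.
  pose proof (limit_minus _ _ D _ _ t (limit_free (fun _ => x) D t t) (lim_x D t)) as clin.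
  pose proof (limit_mul _ _ D _ _ t clin clin) as csq.
  pose proof (limit_minus _ _ D _ _ t
    (limit_minus _ _ D _ _ t
      (limit_minus _ _ D _ _ t (limit_free (fun _ => f x) D t t) c0)
      (limit_mul _ _ D _ _ t c1 clin))
    (limit_mul _ _ D _ _ t (limit_mul _ _ D _ _ t c2 csq)
      (limit_free (fun _ => / 2) D t t))) as c.
  refine (limit1_ext _ _ _ _ _ _ _ _ c); [intro s | ]; unfold taylor_rem; field.
Qed.

Lemma above_mul_sq (t x : R) : above t x * (x - t) ^ 2 = pos_sq t x.
Proof. unfold above, pos_sq; destruct (Rle_dec t x); ring. Qed.

Lemma above_gap (u v t x : R) : u < t <= v -> ~ (u < x < v) -> above t x = above v x.
Proof.
  intros ht hx; unfold above.
  destruct (Rle_dec t x), (Rle_dec v x); reflexivity || lra.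
Qed.

(* At the left end u the indicators may differ only at x = u, where the
   Taylor remainder vanishes. *)
Lemma above_gap_left (f f1 f2 : R -> R) (u v x : R) : u < v -> ~ (u < x < v) ->
  above u x * taylor_rem f f1 f2 u x = above v x * taylor_rem f f1 f2 u x.
Proof.
  intros huv hx; unfold above.
  destruct (Rle_dec u x), (Rle_dec v x); try reflexivity; try lra.
  replace x with u by lra; rewrite taylor_rem_self; ring.
Qed.

Section TaylorFunctional.

Variables (a b : R) (f f1 f2 f3 : R -> R) (mu : list (R * R)).

Hypothesis hderiv : forall x, a <= x <= b ->
  deriv_within (fun y => a <= y <= b) f x (f1 x) /\
  deriv_within (fun y => a <= y <= b) f1 x (f2 x) /\
  deriv_within (fun y => a <= y <= b) f2 x (f3 x) /\ 0 <= f3 x.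

Hypothesis hpts : forall c x, In (c, x) mu -> a <= x <= b.

Definition Phi (t : R) : R :=
  msum mu (fun x => above t x * taylor_rem f f1 f2 t x).

(* Phi with the indicator frozen at v; it is smooth in t. *)
Definition Phi_frozen (v t : R) : R :=
  msum mu (fun x => above v x * taylor_rem f f1 f2 t x).

(* At the right end only atoms at b are counted, and there the remainder vanishes. *)
Lemma Phi_right_end : Phi b = 0.
Proof.
  unfold Phi; rewrite <- (msum_zero mu); apply msum_ext_in; intros c x hin.
  destruct (hpts c x hin) as [_ hxb]; unfold above.
  destruct (Rle_dec b x); [replace x with b by lra; rewrite taylor_rem_self|]; ring.
Qed.

(* At the left end every point is counted and the second-order Taylor
   polynomial is killed by the vanishing moments. *)
Lemma Phi_left_end :
  msum mu (fun _ => 1) = 0 -> msum mu (fun x => x) = 0 -> msum mu (fun x => x ^ 2) = 0 ->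
  Phi a = msum mu f.
Proof.
  intros m0 m1 m2; unfold Phi.
  rewrite (msum_ext_in mu _ (fun x => f x - ((f a - f1 a * a + f2 a * a ^ 2 / 2)
             + (f1 a - f2 a * a) * x + f2 a / 2 * x ^ 2))).
  - rewrite msum_sub_quadratic, m0, m1, m2; ring.
  - intros c x hin; destruct (hpts c x hin) as [hax _]; unfold above, taylor_rem.
    destruct (Rle_dec a x); [field | lra].
Qed.

Lemma Phi_frozen_derive (v t : R) : a < t < b ->
  derivable_pt_lim (Phi_frozen v) t
    (msum mu (fun x => above v x * (- f3 t * (x - t) ^ 2 / 2))).
Proof.
  intros ht; destruct (hderiv t ltac:(lra)) as [d0 [d1 [d2 _]]].
  apply (msum_derive mu (fun s x => above v x * taylor_rem f f1 f2 s x)); intros x.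
  apply (derivable_pt_lim_scal (fun s => taylor_rem f f1 f2 s x)).
  apply taylor_rem_derive; eapply deriv_within_interior; eassumption.
Qed.

Lemma Phi_frozen_limit (v t : R) : a <= t <= b ->
  limit1_in (Phi_frozen v) (fun y => a <= y <= b) (Phi_frozen v t) t.
Proof.
  intros ht; destruct (hderiv t ht) as [d0 [d1 [d2 _]]].
  apply (msum_limit mu (fun s x => above v x * taylor_rem f f1 f2 s x)); intros x.
  apply (limit_mul _ _ _ _ _ t (limit_free (fun _ => above v x) _ t t)).
  apply taylor_rem_limit; eapply deriv_within_continuous; eassumption.
Qed.

(* Across an interval free of points, Phi coincides with the smooth Phi_frozen,
   whose derivative -f'''(t)/2 * sum_k c_k (x_k - t)_+^2 is nonpositive. *)
Lemma Phi_gap (u v : R) :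
  (forall t, a < t < b -> 0 <= msum mu (pos_sq t)) ->
  a <= u -> u < v -> v <= b -> (forall c x, In (c, x) mu -> ~ (u < x < v)) ->
  Phi v <= Phi u.
Proof.
  intros hpos hau huv hvb hfree.
  assert (left_eq : Phi u = Phi_frozen v u).
  { apply msum_ext_in; intros c x hin; apply above_gap_left; [lra | exact (hfree c x hin)]. }
  rewrite left_eq; change (Phi v) with (Phi_frozen v v).
  apply (nonincreasing_of_deriv_nonpos _
    (fun t => msum mu (fun x => above v x * (- f3 t * (x - t) ^ 2 / 2))) u v huv).
  - intros t ht; apply Phi_frozen_derive; lra.
  - intros t ht; destruct (hderiv t ltac:(lra)) as [_ [_ [_ h3]]].
    rewrite (msum_ext_in mu _ (fun x => - f3 t / 2 * pos_sq t x)).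
    + rewrite msum_scal; pose proof (hpos t ltac:(lra)); nra.
    + intros c x hin.
      rewrite <- above_mul_sq, (above_gap u v t x) by (lra || exact (hfree c x hin)); field.
  - apply (limit1_imp _ (fun y => a <= y <= b)); [intros y hy; lra | apply Phi_frozen_limit; lra].
  - apply (limit1_imp _ (fun y => a <= y <= b)); [intros y hy; lra | apply Phi_frozen_limit; lra].
Qed.

(* The analytic half: Phi decreases from Phi a = int f dmu to Phi b = 0. *)
Lemma msum_nonneg_of_pos_sq :
  msum mu (fun _ => 1) = 0 -> msum mu (fun x => x) = 0 -> msum mu (fun x => x ^ 2) = 0 ->
  (forall t, a < t < b -> 0 <= msum mu (pos_sq t)) ->
  0 <= msum mu f.
Proof.
  intros m0 m1 m2 hpos.
  assert (hcase : mu = nil \/ a <= b).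
  { destruct mu as [|[c x] rest]; [left; reflexivity | right].
    destruct (hpts c x (or_introl eq_refl)); lra. }
  destruct hcase as [-> | hab]; [simpl; lra|].
  rewrite <- Phi_left_end, <- Phi_right_end by assumption.
  apply (nonincreasing_off_points Phi a b (map snd mu)); try lra.
  intros u v hau huv hvb hfree; apply Phi_gap; try assumption.
  intros c' x' hin; apply hfree, in_map_iff; exists (c', x'); auto.
Qed.

End TaylorFunctional.

Theorem third_order_dominance (a b : R) (f : R -> R) (mu : list (R * R)) :
  thrice_diff_nonneg3 a b f ->
  (forall c x, In (c, x) mu -> a <= x <= b) ->
  msum mu (fun _ => 1) = 0 -> msum mu (fun x => x) = 0 -> msum mu (fun x => x ^ 2) = 0 ->
  (forall t, a < t < b -> 0 <= msum mu (pos_sq t)) ->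
  0 <= msum mu f.
Proof.
  intros [f1 [f2 [f3 hderiv]]] hpts.
  exact (msum_nonneg_of_pos_sq a b f f1 f2 f3 mu hderiv hpts).
Qed.

Lemma affine_nonneg_between (l : R -> R) (p q x1 x2 t : R) :
  (forall s, l s = p + q * s) -> x1 <= t <= x2 -> 0 <= l x1 -> 0 <= l x2 -> 0 <= l t.
Proof. intros hl ht; rewrite !hl; destruct (Rle_dec 0 q); nra. Qed.

(* The one-sided step: h(t) = l0(t) + c (X - t)^2 with l0 affine is nonnegative on
   [Y, X] once l0 is nonnegative on the upper half and
   l1 = l0 + c ((X - .)^2 - (Y - .)^2) on the lower half.  For c >= 0 this is a
   sum of nonnegative terms on either half; for c < 0, h is concave and
   nonnegative at both ends h(X) = l0(X), h(Y) = l1(Y). *)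
Lemma one_sided_nonneg (l0 l1 : R -> R) (p q c X Y t : R) :
  (forall s, l0 s = p + q * s) ->
  (forall s, l1 s = l0 s + c * ((X - s) ^ 2 - (Y - s) ^ 2)) ->
  (forall s, (X + Y) / 2 <= s <= X -> 0 <= l0 s) ->
  (forall s, Y <= s <= (X + Y) / 2 -> 0 <= l1 s) ->
  Y <= t <= X -> 0 <= l0 t + c * (X - t) ^ 2.
Proof.
  intros hl0 hl1 hupper hlower ht.
  assert (hsq : forall s, 0 <= s ^ 2) by (intro s; apply pow2_ge_0).
  destruct (Rle_dec 0 c) as [hc|hc].
  - destruct (Rle_dec ((X + Y) / 2) t) as [hmid|hmid].
    + pose proof (hupper t ltac:(lra)); pose proof (hsq (X - t)); nra.
    + replace (l0 t + c * (X - t) ^ 2) with (l1 t + c * (Y - t) ^ 2) by (rewrite hl1; ring).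
      pose proof (hlower t ltac:(lra)); pose proof (hsq (Y - t)); nra.
  - pose proof (hupper X ltac:(lra)) as hX; pose proof (hlower Y ltac:(lra)) as hY.
    rewrite hl1, !hl0 in hY; rewrite hl0 in hX |- *.
    assert (interp : (X - Y) * (p + q * t + c * (X - t) ^ 2)
        = (X - t) * (p + q * Y + c * ((X - Y) ^ 2 - (Y - Y) ^ 2)) + (t - Y) * (p + q * X)
          - c * ((X - Y) * (X - t) * (t - Y))) by ring.
    destruct (Req_dec X Y) as [<-|hXY]; [replace t with X by lra; nra|].
    assert (0 <= (X - t) * (t - Y)) by nra.
    assert (0 <= (X - Y) * ((X - t) * (t - Y))) by nra.
    assert (0 <= (X - Y) * (p + q * t + c * (X - t) ^ 2)) by (rewrite interp; nra).
    nra.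
Qed.

Lemma first_exceeding (m : nat -> R) (t : R) (k : nat) :
  exists j, (j <= k)%nat /\ (forall i, (1 <= i <= j)%nat -> t <= m i) /\
            ((j < k)%nat -> m (S j) < t).
Proof.
  induction k as [|k [j [hjk [hpre hnext]]]].
  - exists 0%nat; repeat split; intros; lia.
  - destruct (Nat.eq_dec j k) as [->|hne].
    + destruct (Rle_dec t (m (S k))) as [hle|hlt].
      * exists (S k); repeat split; [lia | | intros; lia].
        intros i hi; destruct (Nat.eq_dec i (S k)) as [->|]; [exact hle | apply hpre; lia].
      * exists k; repeat split; [lia | exact hpre | intros; lra].
    + exists j; repeat split; [lia | exact hpre | intros; apply hnext; lia].
Qed.

Section HingeSum.

Variables (n : nat) (w A B : nat -> R).

Definition L (j : nat) (t : R) : R :=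
  sum1 j (fun i => w i * ((A i - t) ^ 2 - (B i - t) ^ 2)).

Definition mid (i : nat) : R := (A i + B i) / 2.

(* G t = int (x - t)_+^2 dmu for mu = sum_i w_i (delta_{A_i} - delta_{B_i}). *)
Definition G (t : R) : R := sum1 n (fun i => w i * pos_sq t (A i) - w i * pos_sq t (B i)).

Lemma L_linear (j : nat) (t : R) :
  L j t = (sum1 j (fun i => w i * A i ^ 2) - sum1 j (fun i => w i * B i ^ 2))
          - 2 * t * (sum1 j (fun i => w i * A i) - sum1 j (fun i => w i * B i)).
Proof. unfold L; induction j as [|j IH]; cbn [sum1]; [|rewrite IH]; ring. Qed.

Lemma L_affine (j : nat) : exists p q, forall t, L j t = p + q * t.
Proof.
  exists (sum1 j (fun i => w i * A i ^ 2) - sum1 j (fun i => w i * B i ^ 2)),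
         (- 2 * (sum1 j (fun i => w i * A i) - sum1 j (fun i => w i * B i))).
  intro t; rewrite L_linear; ring.
Qed.

Lemma L_succ (j : nat) (t : R) :
  L (S j) t = L j t + w (S j) * ((A (S j) - t) ^ 2 - (B (S j) - t) ^ 2).
Proof. reflexivity. Qed.

(* The hypothesis of the theorem for j is exactly L j (mid (S j)) >= 0, since
   (x - P)(x - Q) = (x - (P + Q)/2)^2 - ((P - Q)/2)^2. *)
Lemma cross_sum_as_L (j : nat) (P Q : R) :
  sum1 j (fun i => w i * (A i - P) * (A i - Q)) - sum1 j (fun i => w i * (B i - P) * (B i - Q))
  = L j ((P + Q) / 2).
Proof.
  unfold L; induction j as [|j IH]; cbn [sum1]; [ring|].
  rewrite <- IH; field.
Qed.

Hypothesis hsep : forall i, (1 <= i < n)%nat ->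
  Rmin (A i) (B i) >= Rmax (A (S i)) (B (S i)).
Hypothesis h1 : sum1 n (fun i => w i * A i) = sum1 n (fun i => w i * B i).
Hypothesis h2 : sum1 n (fun i => w i * (A i) ^ 2) = sum1 n (fun i => w i * (B i) ^ 2).
Hypothesis h3 : forall j, (1 <= j < n)%nat ->
  sum1 j (fun i => w i * (A i - A (S j)) * (A i - B (S j)))
  >= sum1 j (fun i => w i * (B i - A (S j)) * (B i - B (S j))).

Lemma L_full (t : R) : L n t = 0.
Proof. rewrite L_linear, h1, h2; ring. Qed.

Lemma L_at_mid (j : nat) : (j < n)%nat -> 0 <= L j (mid (S j)).
Proof.
  intros hj; destruct j as [|j]; [unfold L; simpl; lra|].
  unfold mid; rewrite <- cross_sum_as_L; pose proof (h3 (S j) ltac:(lia)); lra.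
Qed.

Lemma L_nonneg (k : nat) (x : R) : (k <= n)%nat ->
  ((k < n)%nat -> mid (S k) <= x) -> ((1 <= k)%nat -> x <= mid k) -> 0 <= L k x.
Proof.
  intros hk hlo hhi.
  destruct k as [|k]; [unfold L; simpl; lra|].
  destruct (Nat.eq_dec (S k) n) as [hkn|hne]; [rewrite hkn, L_full; lra|].
  destruct (L_affine (S k)) as [p [q hl]].
  apply (affine_nonneg_between _ p q (mid (S (S k))) (mid (S k))); [exact hl | | |].
  - split; [apply hlo | apply hhi]; lia.
  - apply L_at_mid; lia.
  - rewrite L_succ; unfold mid at 2 3.
    replace ((A (S k) - (A (S k) + B (S k)) / 2) ^ 2 - (B (S k) - (A (S k) + B (S k)) / 2) ^ 2)
      with 0 by field.
    pose proof (L_at_mid k ltac:(lia)); lra.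
Qed.

Lemma mid_between (i : nat) : Rmin (A i) (B i) <= mid i <= Rmax (A i) (B i).
Proof. unfold mid, Rmin, Rmax; destruct (Rle_dec (A i) (B i)); lra. Qed.

Lemma sep_chain (k i : nat) : (1 <= k)%nat -> (k < i <= n)%nat ->
  Rmax (A i) (B i) <= Rmin (A k) (B k).
Proof.
  induction i as [|i IH]; intros hk hki; [lia|].
  pose proof (hsep i ltac:(lia)).
  destruct (Nat.eq_dec i k) as [->|hne]; [lra|].
  pose proof (IH hk ltac:(lia)); pose proof (mid_between i); lra.
Qed.

Lemma L_nonneg_upper (j : nat) (s : R) : (j < n)%nat ->
  mid (S j) <= s <= Rmax (A (S j)) (B (S j)) -> 0 <= L j s.
Proof.
  intros hj hs; apply L_nonneg; [lia | intros; lra |].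
  intros hj1; pose proof (hsep j ltac:(lia)); pose proof (mid_between j); lra.
Qed.

Lemma L_nonneg_lower (j : nat) (s : R) : (j < n)%nat ->
  Rmin (A (S j)) (B (S j)) <= s <= mid (S j) -> 0 <= L (S j) s.
Proof.
  intros hj hs; apply L_nonneg; [lia | | intros; lra].
  intros hj1; pose proof (hsep (S j) ltac:(lia)); pose proof (mid_between (S (S j))); lra.
Qed.

Lemma G_prefix (j : nat) (t : R) :
  (forall i, (1 <= i <= j)%nat -> t <= Rmin (A i) (B i)) ->
  sum1 j (fun i => w i * pos_sq t (A i) - w i * pos_sq t (B i)) = L j t.
Proof.
  intros hpre; apply sum1_ext; intros i hi.
  pose proof (hpre i hi); pose proof (Rmin_l (A i) (B i)); pose proof (Rmin_r (A i) (B i)).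
  unfold pos_sq; destruct (Rle_dec t (A i)), (Rle_dec t (B i)); lra || ring.
Qed.

Lemma G_split (j : nat) (t : R) : (j < n)%nat -> Rmin (A (S j)) (B (S j)) < t ->
  G t = sum1 (S j) (fun i => w i * pos_sq t (A i) - w i * pos_sq t (B i)).
Proof.
  intros hj ht; apply sum1_trunc; [lia|]; intros i hi.
  pose proof (sep_chain (S j) i ltac:(lia) ltac:(lia)).
  pose proof (Rmax_l (A i) (B i)); pose proof (Rmax_r (A i) (B i)).
  unfold pos_sq; destruct (Rle_dec t (A i)), (Rle_dec t (B i)); lra || ring.
Qed.

(* G >= 0.  Let j be the number of leading pairs lying entirely above t.
   The pairs after j+1 drop out and the first j contribute L j t; the
   contribution of pair j+1 depends on which of its points lie above t. *)
Theorem G_nonneg (t : R) : 0 <= G t.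
Proof.
  destruct (first_exceeding (fun i => Rmin (A i) (B i)) t n) as [j [hjn [hpre hnext]]].
  destruct (Nat.eq_dec j n) as [hjn'|hne].
  { unfold G; rewrite <- hjn', G_prefix, hjn', L_full by exact hpre; lra. }
  assert (hj : (j < n)%nat) by lia; specialize (hnext hj); cbv beta in hnext.
  rewrite (G_split j t hj hnext); cbn [sum1]; rewrite G_prefix by exact hpre.
  set (P := A (S j)) in *; set (Q := B (S j)) in *.
  pose proof (Rmin_l P Q); pose proof (Rmin_r P Q).
  pose proof (Rmax_l P Q); pose proof (Rmax_r P Q).
  pose proof (mid_between (S j)) as hmid; fold P Q in hmid.
  destruct (L_affine j) as [p [q hl]].
  unfold pos_sq; destruct (Rle_dec t P) as [hP|hP]; destruct (Rle_dec t Q) as [hQ|hQ].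
  - pose proof (Rmin_glb P Q t hP hQ); lra.
  -
    replace (L j t + (w (S j) * (P - t) ^ 2 - w (S j) * 0))
      with (L j t + w (S j) * (P - t) ^ 2) by ring.
    apply (one_sided_nonneg (L j) (L (S j)) p q (w (S j)) P Q t hl);
      [intro s; reflexivity | | | lra].
    + intros s hs; apply L_nonneg_upper; [exact hj | unfold mid; fold P Q; lra].
    + intros s hs; apply L_nonneg_lower; [exact hj | unfold mid; fold P Q; lra].
  -
    replace (L j t + (w (S j) * 0 - w (S j) * (Q - t) ^ 2))
      with (L j t + - w (S j) * (Q - t) ^ 2) by ring.
    apply (one_sided_nonneg (L j) (L (S j)) p q (- w (S j)) Q P t hl);
      [intro s; rewrite L_succ; fold P Q; ring | | | lra].
    + intros s hs; apply L_nonneg_upper; [exact hj | unfold mid; fold P Q; lra].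
    + intros s hs; apply L_nonneg_lower; [exact hj | unfold mid; fold P Q; lra].
  -
    replace (L j t + (w (S j) * 0 - w (S j) * 0)) with (L j t) by ring.
    apply L_nonneg; [lia | intros; unfold mid; fold P Q; lra |].
    intros hj1; pose proof (hpre j ltac:(lia)); pose proof (mid_between j); lra.
Qed.

End HingeSum.

Fixpoint pair_points (n : nat) (w A B : nat -> R) : list (R * R) :=
  match n with
  | O => nil
  | S k => (w (S k), A (S k)) :: (- w (S k), B (S k)) :: pair_points k w A B
  end.

Lemma msum_pair_points (n : nat) (w A B : nat -> R) (g : R -> R) :
  msum (pair_points n w A B) g
  = sum1 n (fun i => w i * g (A i)) - sum1 n (fun i => w i * g (B i)).
Proof. induction n as [|n IH]; cbn [pair_points msum sum1]; [|rewrite IH]; ring. Qed.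

Lemma in_pair_points (n : nat) (w A B : nat -> R) (c x : R) :
  In (c, x) (pair_points n w A B) -> exists i, (1 <= i <= n)%nat /\ (x = A i \/ x = B i).
Proof.
  induction n as [|n IH]; simpl; [intros []|].
  intros [hA | [hB | hin]].
  - exists (S n); split; [lia | left; congruence].
  - exists (S n); split; [lia | right; congruence].
  - destruct (IH hin) as [i [hi hx]]; exists i; split; [lia | exact hx].
Qed.

Theorem mainTheorem11 (n : nat) (w A B : nat -> R) (a b : R)
  (hA_dec : forall i, (1 <= i < n)%nat -> A (S i) <= A i)
  (hB_dec : forall i, (1 <= i < n)%nat -> B (S i) <= B i)
  (hA_rng : forall i, (1 <= i <= n)%nat -> a <= A i <= b)
  (hB_rng : forall i, (1 <= i <= n)%nat -> a <= B i <= b)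
  (hsep : forall i, (1 <= i < n)%nat ->
            Rmin (A i) (B i) >= Rmax (A (S i)) (B (S i)))
  (h1 : sum1 n (fun i => w i * A i) = sum1 n (fun i => w i * B i))
  (h2 : sum1 n (fun i => w i * (A i)^2) = sum1 n (fun i => w i * (B i)^2))
  (h3 : forall j, (1 <= j < n)%nat ->
          sum1 j (fun i => w i * (A i - A (S j)) * (A i - B (S j)))
          >= sum1 j (fun i => w i * (B i - A (S j)) * (B i - B (S j))))
  (f : R -> R) (hf : thrice_diff_nonneg3 a b f) :
  sum1 n (fun i => w i * f (A i)) >= sum1 n (fun i => w i * f (B i)).
Proof.
  set (mu := pair_points n w A B).
  assert (hdom : 0 <= msum mu f).
  { apply (third_order_dominance a b f mu hf).
    - intros c x hin; destruct (in_pair_points n w A B c x hin) as [i [hi [-> | ->]]]; auto.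
    - unfold mu; rewrite msum_pair_points; ring.
    - unfold mu; rewrite msum_pair_points, h1; ring.
    - unfold mu; rewrite msum_pair_points, h2; ring.
    - intros t _; unfold mu; rewrite msum_pair_points.
      rewrite <- sum1_minus; exact (G_nonneg n w A B hsep h1 h2 h3 t). }
  unfold mu in hdom; rewrite msum_pair_points in hdom; lra.
Qed.
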